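(* Let $\lambda\neq0$ and $U=\{x\in\mathbb R^4:x^2>|x^4|\}$. Write $x^2=\rho\,\mathrm{ch}(\lambda\varphi)$, $x^4=\rho\,\mathrm{sh}(\lambda\varphi)$ with $\rho>0$, $\varphi\in\mathbb R$ (i.e. $\rho=\sqrt{(x^2)^2-(x^4)^2}$, $\lambda\varphi=\operatorname{artanh}(x^4/x^2)$). Then a smooth covector field $A$ on $U$ satisfies $L_\xi A=0$ for $\xi\in\{e_{13}+\lambda e_{24},\,e_1,\,e_3\}$ if and only if there are smooth functions $C_1,\dots,C_4$ of $\rho\in(0,\infty)$ such that $$A_1=C_1(\rho)\cos\varphi+C_2(\rho)\sin\varphi,\quad A_2=C_3(\rho)\,\mathrm{ch}\,\lambda\varphi+C_4(\rho)\,\mathrm{sh}\,\lambda\varphi,$$ $$A_3=-C_1(\rho)\sin\varphi+C_2(\rho)\cos\varphi,\quad A_4=-C_3(\rho)\,\mathrm{sh}\,\lambda\varphi-C_4(\rho)\,\mathrm{ch}\,\lambda\varphi .$$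
   Context: Work in $\mathbb R^4$ with Galilean (Cartesian) coordinates $x^1,x^2,x^3,x^4$ of Minkowski space (metric $\mathrm{diag}(-1,-1,-1,1)$). A potential on an open set $U\subseteq\mathbb R^4$ is a smooth covector field $A=A_i\,dx^i$; its components $A_i$ are always those with respect to the coordinates $x^i$, even when written as functions of other variables. For a vector field $\xi=\xi^k\partial_k$ the Lie derivative is $(L_\xi A)_i=\xi^k\partial_kA_i+A_k\partial_i\xi^k$. The vector fields used are, by components $(\xi^1,\xi^2,\xi^3,\xi^4)$: $e_1=(1,0,0,0)$, $e_2=(0,1,0,0)$, $e_3=(0,0,1,0)$, $e_4=(0,0,0,1)$, $e_{12}=(-x^2,x^1,0,0)$, $e_{13}=(x^3,0,-x^1,0)$, $e_{23}=(0,-x^3,x^2,0)$, $e_{14}=(x^4,0,0,x^1)$, $e_{24}=(0,x^4,0,x^2)$, $e_{34}=(0,0,x^4,x^3)$. A potential admits a family of vector fields if $L_\xi A=0$ for each $\xi$ in it (equivalently for every element of their linear span). ''Functions'' are smooth real functions; $\mathrm{ch}=\cosh$, $\mathrm{sh}=\sinh$. *)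

From Stdlib Require Import Reals.
From Coquelicot Require Import Coquelicot.
Open Scope R_scope.

Record pt := Pt { x1 : R; x2 : R; x3 : R; x4 : R }.

Definition coord (k : nat) (p : pt) : R :=
  match k with 1%nat => x1 p | 2%nat => x2 p | 3%nat => x3 p | 4%nat => x4 p | _ => 0 end.

Definition shift (k : nat) (t : R) (p : pt) : pt :=
  match k with
  | 1%nat => Pt (x1 p + t) (x2 p) (x3 p) (x4 p)
  | 2%nat => Pt (x1 p) (x2 p + t) (x3 p) (x4 p)
  | 3%nat => Pt (x1 p) (x2 p) (x3 p + t) (x4 p)
  | 4%nat => Pt (x1 p) (x2 p) (x3 p) (x4 p + t)
  | _ => p
  end.

Definition partial (k : nat) (f : pt -> R) (p : pt) : R :=
  Derive (fun t => f (shift k t p)) 0.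

Definition has_partial (k : nat) (f : pt -> R) (p : pt) : Prop :=
  ex_derive (fun t => f (shift k t p)) 0.

Definition continuous_at_pt (f : pt -> R) (p : pt) : Prop :=
  forall eps, 0 < eps -> exists delta, 0 < delta /\
    forall q, Rabs (x1 q - x1 p) < delta -> Rabs (x2 q - x2 p) < delta ->
              Rabs (x3 q - x3 p) < delta -> Rabs (x4 q - x4 p) < delta ->
              Rabs (f q - f p) < eps.

Fixpoint Cn_on (n : nat) (U : pt -> Prop) (f : pt -> R) : Prop :=
  match n with
  | O => forall p, U p -> continuous_at_pt f p
  | S m => (forall p, U p -> continuous_at_pt f p) /\
           forall k, (1 <= k <= 4)%nat ->
             (forall p, U p -> has_partial k f p) /\ Cn_on m U (partial k f)
  end.

Definition smooth_on (U : pt -> Prop) (f : pt -> R) : Prop := forall n, Cn_on n U f.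

Definition smooth_pos (C : R -> R) : Prop :=
  forall (n : nat) (r : R), 0 < r -> ex_derive_n C n r.

(* Vector fields and covector fields: components indexed by 1..4 *)
Definition field := nat -> pt -> R.

Definition smooth_field (U : pt -> Prop) (A : field) : Prop :=
  forall i, (1 <= i <= 4)%nat -> smooth_on U (A i).

Definition lie (xi A : field) (i : nat) (p : pt) : R :=
  sum_f 1 4 (fun k => xi k p * partial k (A i) p + A k p * partial i (xi k) p).

Definition admits (A : field) (xi : field) (U : pt -> Prop) : Prop :=
  forall i p, (1 <= i <= 4)%nat -> U p -> lie xi A i p = 0.

Definition mkfield (f1 f2 f3 f4 : pt -> R) : field :=
  fun k => match k with 1%nat => f1 | 2%nat => f2 | 3%nat => f3 | 4%nat => f4 | _ => fun _ => 0 end.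

Definition e1 : field := mkfield (fun _ => 1) (fun _ => 0) (fun _ => 0) (fun _ => 0).
Definition e3 : field := mkfield (fun _ => 0) (fun _ => 0) (fun _ => 1) (fun _ => 0).
Definition e13 : field := mkfield (fun p => x3 p) (fun _ => 0) (fun p => - x1 p) (fun _ => 0).
Definition e24 : field := mkfield (fun _ => 0) (fun p => x4 p) (fun _ => 0) (fun p => x2 p).

Definition fadd (a b : field) : field := fun k p => a k p + b k p.
Definition fscal (c : R) (a : field) : field := fun k p => c * a k p.

Definition artanh (y : R) : R := ln ((1 + y) / (1 - y)) / 2.

Definition rho (p : pt) : R := sqrt (x2 p ^ 2 - x4 p ^ 2).
Definition phi (lam : R) (p : pt) : R := artanh (x4 p / x2 p) / lam.

Definition U_reg (p : pt) : Prop := x2 p > Rabs (x4 p).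

(* The fields [e1] and [e3] force [A] to be independent of [x^1] and [x^3].  The
   remaining generator [e13 + lam e24] acts on [(x^2, x^4)] as a boost, whose orbits
   [t |-> (r ch (lam t), r sh (lam t))] foliate [U] with [rho = r] and [phi = t].  Along
   each orbit [L_xi A = 0] is the linear ODE [(A1, A3)' = (A3, -A1)],
   [(A2, A4)' = -lam (A4, A2)], whose solutions are the displayed rotations and boosts,
   with coefficients read off on the half-line [x^4 = 0]; conversely, the displayed
   fields solve this ODE along every orbit. *)

From Stdlib Require Import Reals Lra Lia.
From Coquelicot Require Import Coquelicot.
Open Scope R_scope.

Lemma Rabs_sub_le_between a b z : Rmin a b <= z <= Rmax a b -> Rabs (z - a) <= Rabs (b - a).
Proof.
  unfold Rmin, Rmax; destruct (Rle_dec a b); intros [H1 H2];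
  unfold Rabs; repeat destruct Rcase_abs; lra.
Qed.

Lemma Derive_translate (g : R -> R) s : Derive (fun t => g (s + t)) 0 = Derive g s.
Proof.
  unfold Derive. f_equal. apply Lim_ext. intros h. now rewrite Rplus_0_l, Rplus_0_r.
Qed.

Lemma is_derive_translate (g : R -> R) s l :
  is_derive (fun t => g (s + t)) 0 l -> is_derive g s l.
Proof.
  intros H.
  apply is_derive_ext with (f := fun z => (fun t => g (s + t)) (z - s)).
  { intros z. simpl. f_equal. apply Rplus_minus. }
  replace 0 with (s - s) in H by ring.
  replace l with (scal 1 l) by (unfold scal; simpl; unfold mult; simpl; ring).
  apply (is_derive_comp (fun t => g (s + t)) (fun z => z - s) s l 1 H). auto_derive; [exact I | ring].
Qed.

Lemma ex_derive_translate (g : R -> R) s : ex_derive (fun t => g (s + t)) 0 -> ex_derive g s.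
Proof. intros [l H]. exists l. now apply is_derive_translate. Qed.

Lemma derivable_pt_lim_remainder (g : R -> R) y l eps : derivable_pt_lim g y l -> 0 < eps ->
  exists d : posreal, forall v, Rabs (v - y) < d -> Rabs (g v - g y - l * (v - y)) <= eps * Rabs (v - y).
Proof.
  intros H He. destruct (H eps He) as [d Hd]. exists d. intros v Hv.
  destruct (Req_dec v y) as [->|E].
  - replace (g y - g y - l * (y - y)) with 0 by ring. rewrite Rminus_diag, Rabs_R0. lra.
  - specialize (Hd (v - y) ltac:(lra) Hv). replace (y + (v - y)) with v in Hd by ring.
    replace (g v - g y - l * (v - y)) with (((g v - g y) / (v - y) - l) * (v - y)) by (field; lra).
    rewrite Rabs_mult. apply Rmult_le_compat_r; [apply Rabs_pos | lra].
Qed.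

Lemma differentiable_pt_lim_of_partials (f : R -> R -> R) x y :
  locally_2d (fun u v => ex_derive (fun z => f z v) u) x y ->
  continuity_2d_pt (fun u v => Derive (fun z => f z v) u) x y ->
  ex_derive (fun z => f x z) y ->
  differentiable_pt_lim f x y (Derive (fun z => f z y) x) (Derive (fun z => f x z) y).
Proof.
  intros [d0 Hd0] Hc Hy eps.
  assert (He2 : 0 < eps/2) by (destruct eps; simpl; lra).
  destruct (Hc (mkposreal _ He2)) as [d1 Hd1].
  assert (Hy' := Derive_correct _ _ Hy). apply is_derive_Reals in Hy'.
  destruct (derivable_pt_lim_remainder _ _ _ _ Hy' He2) as [d2 Hd2].
  assert (Hm : 0 < Rmin d0 (Rmin d1 d2)) by (repeat apply Rmin_pos; apply cond_pos).
  exists (mkposreal _ Hm). intros u v Hu Hv. simpl in Hu, Hv.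
  assert (Hu0 : Rabs (u - x) < d0) by (eapply Rlt_le_trans; [apply Hu | apply Rmin_l]).
  assert (Hv0 : Rabs (v - y) < d0) by (eapply Rlt_le_trans; [apply Hv | apply Rmin_l]).
  assert (Hu1 : Rabs (u - x) < d1)
    by (eapply Rlt_le_trans; [apply Hu | eapply Rle_trans; [apply Rmin_r | apply Rmin_l]]).
  assert (Hv1 : Rabs (v - y) < d1)
    by (eapply Rlt_le_trans; [apply Hv | eapply Rle_trans; [apply Rmin_r | apply Rmin_l]]).
  assert (Hv2 : Rabs (v - y) < d2)
    by (eapply Rlt_le_trans; [apply Hv | eapply Rle_trans; [apply Rmin_r | apply Rmin_r]]).
  assert (Hder : forall z, Rmin x u <= z <= Rmax x u -> ex_derive (fun z => f z v) z).
  { intros z Hz. apply Hd0; [|exact Hv0].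
    eapply Rle_lt_trans; [apply (Rabs_sub_le_between x u z Hz) | exact Hu0]. }
  (* mean value theorem in the first variable, tangent line in the second *)
  destruct (MVT_gen (fun z => f z v) x u (fun z => Derive (fun z' => f z' v) z)) as [c [Hc1 Hc2]].
  { intros z Hz. apply (Derive_correct (fun z => f z v)), Hder; simpl in Hz; lra. }
  { intros z Hz. apply continuity_pt_filterlim.
    apply (ex_derive_continuous (K:=R_AbsRing) (V:=R_NormedModule) (fun z => f z v)), Hder; simpl in Hz; lra. }
  assert (Hfirst : Rabs (Derive (fun z => f z v) c - Derive (fun z => f z y) x) < eps / 2).
  { apply (Hd1 c v); [|exact Hv1].
    eapply Rle_lt_trans; [apply Rabs_sub_le_between, Hc1 | exact Hu1]. }
  assert (Hsecond := Hd2 v Hv2).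
  replace (f u v - f x y - (Derive (fun z => f z y) x * (u - x) + Derive (fun z => f x z) y * (v - y)))
    with ((Derive (fun z => f z v) c - Derive (fun z => f z y) x) * (u - x)
          + (f x v - f x y - Derive (fun z => f x z) y * (v - y))) by lra.
  eapply Rle_trans; [apply Rabs_triang|]. rewrite Rabs_mult.
  assert (Hm1 := Rmax_l (Rabs (u - x)) (Rabs (v - y))).
  assert (Hm2 := Rmax_r (Rabs (u - x)) (Rabs (v - y))).
  assert (Hp := Rabs_pos (u - x)). assert (Hq := Rabs_pos (v - y)).
  destruct eps as [e ep]; simpl in *. nra.
Qed.

Lemma eq_of_is_derive_0 (g : R -> R) : (forall s, is_derive g s 0) -> forall a b, g a = g b.
Proof.
  intros H a b. destruct (Rtotal_order a b) as [h|[h|h]].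
  - apply (eq_is_derive (V:=R_NormedModule)); auto.
  - now subst.
  - symmetry. apply (eq_is_derive (V:=R_NormedModule)); auto.
Qed.

Lemma cosh_plus_sinh x : cosh x + sinh x = exp x.
Proof. unfold cosh, sinh. field. Qed.

Lemma cosh_minus_sinh x : cosh x - sinh x = exp (- x).
Proof. unfold cosh, sinh. field. Qed.

Lemma cosh_sq_sub_sinh_sq x : cosh x * cosh x - sinh x * sinh x = 1.
Proof.
  replace (cosh x * cosh x - sinh x * sinh x) with ((cosh x + sinh x) * (cosh x - sinh x)) by ring.
  rewrite cosh_plus_sinh, cosh_minus_sinh, <- exp_plus, Rplus_opp_r. apply exp_0.
Qed.

Lemma Rabs_sinh_lt_cosh x : Rabs (sinh x) < cosh x.
Proof.
  unfold sinh, cosh. assert (H1 := exp_pos x). assert (H2 := exp_pos (- x)).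
  unfold Rabs; destruct Rcase_abs; lra.
Qed.

Lemma cosh_pos x : 0 < cosh x.
Proof. pose proof (Rabs_sinh_lt_cosh x). pose proof (Rabs_pos (sinh x)). lra. Qed.

Lemma rotation_ode_solution (f g : R -> R) :
  (forall t, is_derive f t (g t)) -> (forall t, is_derive g t (- f t)) ->
  forall t, f t = f 0 * cos t + g 0 * sin t /\ g t = - f 0 * sin t + g 0 * cos t.
Proof.
  intros Hf Hg t.
  assert (Df : forall s, Derive f s = g s) by (intros s; apply is_derive_unique, Hf).
  assert (Dg : forall s, Derive g s = - f s) by (intros s; apply is_derive_unique, Hg).
  assert (Ef : forall s, ex_derive f s) by (intros s; eexists; apply Hf).
  assert (Eg : forall s, ex_derive g s) by (intros s; eexists; apply Hg).
  (* rotating [(f s, g s)] back by the angle [s] gives a first integral *)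
  assert (I1 := eq_of_is_derive_0 (fun s => f s * cos s - g s * sin s)
    ltac:(intros s; auto_derive; [auto | rewrite Df, Dg; ring]) t 0).
  assert (I2 := eq_of_is_derive_0 (fun s => f s * sin s + g s * cos s)
    ltac:(intros s; auto_derive; [auto | rewrite Df, Dg; ring]) t 0).
  simpl in I1, I2. rewrite cos_0, sin_0 in I1, I2.
  assert (Hc := sin2_cos2 t). unfold Rsqr in Hc.
  replace (f 0) with (f t * cos t - g t * sin t) by lra.
  replace (g 0) with (f t * sin t + g t * cos t) by lra.
  split; [rewrite <- (Rmult_1_r (f t)) at 1 | rewrite <- (Rmult_1_r (g t)) at 1];
    rewrite <- Hc; ring.
Qed.

Lemma boost_ode_solution (f g : R -> R) lam :
  (forall t, is_derive f t (- (lam * g t))) -> (forall t, is_derive g t (- (lam * f t))) ->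
  forall t, f t = f 0 * cosh (lam * t) - g 0 * sinh (lam * t) /\
            g t = - f 0 * sinh (lam * t) + g 0 * cosh (lam * t).
Proof.
  intros Hf Hg t.
  assert (Df : forall s, Derive f s = - (lam * g s)) by (intros s; apply is_derive_unique, Hf).
  assert (Dg : forall s, Derive g s = - (lam * f s)) by (intros s; apply is_derive_unique, Hg).
  assert (Ef : forall s, ex_derive f s) by (intros s; eexists; apply Hf).
  assert (Eg : forall s, ex_derive g s) by (intros s; eexists; apply Hg).
  assert (I1 := eq_of_is_derive_0 (fun s => f s * cosh (lam * s) + g s * sinh (lam * s))
    ltac:(intros s; unfold cosh, sinh; auto_derive; [auto | rewrite Df, Dg; field]) t 0).
  assert (I2 := eq_of_is_derive_0 (fun s => f s * sinh (lam * s) + g s * cosh (lam * s))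
    ltac:(intros s; unfold cosh, sinh; auto_derive; [auto | rewrite Df, Dg; field]) t 0).
  simpl in I1, I2. rewrite Rmult_0_r, cosh_0, sinh_0 in I1, I2.
  assert (Hc := cosh_sq_sub_sinh_sq (lam * t)).
  replace (f 0) with (f t * cosh (lam * t) + g t * sinh (lam * t)) by lra.
  replace (g 0) with (f t * sinh (lam * t) + g t * cosh (lam * t)) by lra.
  split; [rewrite <- (Rmult_1_r (f t)) at 1 | rewrite <- (Rmult_1_r (g t)) at 1];
    rewrite <- Hc; ring.
Qed.

Definition profile (lam c1 c2 c3 c4 : R) (i : nat) (s : R) : R :=
  match i with
  | 1%nat => c1 * cos s + c2 * sin s
  | 2%nat => c3 * cosh (lam * s) + c4 * sinh (lam * s)
  | 3%nat => - c1 * sin s + c2 * cos s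
  | 4%nat => - c3 * sinh (lam * s) - c4 * cosh (lam * s)
  | _ => 0
  end.

(* The zeroth-order part [A_k d_i xi^k] of [L_xi A] for [xi = e13 + lam e24]. *)
Definition xi_twist {T : Type} (lam : R) (F : nat -> T -> R) (i : nat) (q : T) : R :=
  match i with
  | 1%nat => - F 3%nat q
  | 2%nat => lam * F 4%nat q
  | 3%nat => F 1%nat q
  | 4%nat => lam * F 2%nat q
  | _ => 0
  end.

Lemma xi_twist_ext {T T' : Type} lam (F : nat -> T -> R) (G : nat -> T' -> R) q q' i :
  (forall j, (1 <= j <= 4)%nat -> F j q = G j q') -> xi_twist lam F i q = xi_twist lam G i q'.
Proof.
  intros H. destruct i as [|[|[|[|[|i]]]]]; simpl; rewrite ?H by lia; reflexivity.
Qed.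

Lemma profile_xi_ode lam c1 c2 c3 c4 i t :
  is_derive (profile lam c1 c2 c3 c4 i) t (- xi_twist lam (profile lam c1 c2 c3 c4) i t).
Proof.
  unfold profile, xi_twist.
  destruct i as [|[|[|[|[|i]]]]]; unfold cosh, sinh; auto_derive; auto; field.
Qed.

Lemma xi_ode_solution lam (F : nat -> R -> R) :
  (forall i t, (1 <= i <= 4)%nat -> is_derive (F i) t (- xi_twist lam F i t)) ->
  forall i t, (1 <= i <= 4)%nat ->
    F i t = profile lam (F 1%nat 0) (F 3%nat 0) (F 2%nat 0) (- F 4%nat 0) i t.
Proof.
  intros H i t Hi.
  assert (H1 : forall t, is_derive (F 1%nat) t (F 3%nat t)).
  { intros s. rewrite <- (Ropp_involutive (F 3%nat s)). apply (H 1%nat); lia. }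
  assert (H3 : forall t, is_derive (F 3%nat) t (- F 1%nat t)) by (intros s; apply (H 3%nat); lia).
  assert (H2 : forall t, is_derive (F 2%nat) t (- (lam * F 4%nat t))) by (intros s; apply (H 2%nat); lia).
  assert (H4 : forall t, is_derive (F 4%nat) t (- (lam * F 2%nat t))) by (intros s; apply (H 4%nat); lia).
  destruct (rotation_ode_solution _ _ H1 H3 t) as [R1 R3].
  destruct (boost_ode_solution _ _ lam H2 H4 t) as [R2 R4].
  destruct i as [|[|[|[|[|i]]]]]; try lia; simpl;
    [rewrite R1 | rewrite R2 | rewrite R3 | rewrite R4]; ring.
Qed.

Lemma artanh_tanh y : artanh (sinh y / cosh y) = y.
Proof.
  unfold artanh. pose proof (cosh_pos y). pose proof (exp_pos y).
  assert (0 < cosh y - sinh y) by (rewrite cosh_minus_sinh; apply exp_pos).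
  replace ((1 + sinh y / cosh y) / (1 - sinh y / cosh y)) with
    ((cosh y + sinh y) / (cosh y - sinh y)) by (field; split; lra).
  rewrite cosh_plus_sinh, cosh_minus_sinh, exp_Ropp.
  replace (exp y / / exp y) with (exp (y + y)) by (rewrite exp_plus; field; lra).
  rewrite ln_exp. field.
Qed.

Lemma hyperbolic_polar u v : u > Rabs v ->
  0 < sqrt (u ^ 2 - v ^ 2) /\
  sqrt (u ^ 2 - v ^ 2) * cosh (artanh (v / u)) = u /\
  sqrt (u ^ 2 - v ^ 2) * sinh (artanh (v / u)) = v.
Proof.
  intros Huv. unfold artanh.
  assert (Hm : u - v > 0) by (revert Huv; unfold Rabs; destruct Rcase_abs; lra).
  assert (Hp : u + v > 0) by (revert Huv; unfold Rabs; destruct Rcase_abs; lra).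
  replace ((1 + v / u) / (1 - v / u)) with ((u + v) / (u - v)) by (field; lra).
  set (z := ln ((u + v) / (u - v)) / 2).
  assert (Hz : exp z * exp z = (u + v) / (u - v)).
  { rewrite <- exp_plus. unfold z. replace (_ / 2 + _ / 2) with (ln ((u + v) / (u - v))) by field.
    apply exp_ln, Rdiv_lt_0_compat; lra. }
  assert (Hr2 : 0 < u ^ 2 - v ^ 2) by nra.
  assert (Hrr := sqrt_sqrt _ (Rlt_le _ _ Hr2)).
  assert (Hr := sqrt_lt_R0 _ Hr2).
  set (r := sqrt (u ^ 2 - v ^ 2)) in *.
  assert (Ez := exp_pos z).
  (* [r e^z = u + v] by comparing squares, then [r e^-z = u - v] since [r^2 = (u + v) (u - v)] *)
  assert (E1 : r * exp z = u + v).
  { assert (Hsq : (r * exp z) * (r * exp z) = (u + v) * (u + v)).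
    { replace ((r * exp z) * (r * exp z)) with ((r * r) * (exp z * exp z)) by ring.
      rewrite Hrr, Hz. field. lra. }
    assert (0 < r * exp z) by (apply Rmult_lt_0_compat; lra).
    nra. }
  assert (E2 : r * exp (- z) = u - v).
  { rewrite exp_Ropp. apply Rmult_eq_reg_l with (u + v); [|lra].
    rewrite <- E1 at 1. replace (r * exp z * (r * / exp z)) with (r * r) by (field; lra).
    rewrite Hrr. ring. }
  unfold cosh, sinh. split; [exact Hr | split]; lra.
Qed.

Definition boost_orbit (lam a c r t : R) : pt :=
  Pt a (r * cosh (lam * t)) c (r * sinh (lam * t)).

Lemma boost_orbit_0 lam a c r : boost_orbit lam a c r 0 = Pt a r c 0.
Proof. unfold boost_orbit. rewrite Rmult_0_r, cosh_0, sinh_0. f_equal; ring. Qed.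

Lemma boost_orbit_in_U lam a c r t : 0 < r -> U_reg (boost_orbit lam a c r t).
Proof.
  intros Hr. unfold U_reg, boost_orbit; simpl.
  rewrite Rabs_mult, (Rabs_right r) by lra.
  apply Rmult_lt_compat_l; [lra | apply Rabs_sinh_lt_cosh].
Qed.

Lemma rho_boost_orbit lam a c r t : 0 < r -> rho (boost_orbit lam a c r t) = r.
Proof.
  intros Hr. unfold rho, boost_orbit; cbn [x2 x4].
  replace ((r * cosh (lam * t)) ^ 2 - (r * sinh (lam * t)) ^ 2) with (r * r).
  - apply sqrt_square. lra.
  - rewrite <- (Rmult_1_r (r * r)) at 1. rewrite <- (cosh_sq_sub_sinh_sq (lam * t)). ring.
Qed.

Lemma phi_boost_orbit lam a c r t : lam <> 0 -> 0 < r -> phi lam (boost_orbit lam a c r t) = t.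
Proof.
  intros Hl Hr. unfold phi, boost_orbit; cbn [x2 x4]. pose proof (cosh_pos (lam * t)).
  replace (r * sinh (lam * t) / (r * cosh (lam * t))) with (sinh (lam * t) / cosh (lam * t))
    by (field; lra).
  rewrite artanh_tanh. field. exact Hl.
Qed.

Lemma boost_orbit_through lam p : lam <> 0 -> U_reg p ->
  0 < rho p /\ boost_orbit lam (x1 p) (x3 p) (rho p) (phi lam p) = p.
Proof.
  intros Hl Hp. destruct p as [a u c v]. unfold U_reg, rho, phi, boost_orbit in *; cbn [x1 x2 x3 x4] in *.
  destruct (hyperbolic_polar u v Hp) as [Hr [Ec Es]].
  replace (lam * (artanh (v / u) / lam)) with (artanh (v / u)) by (field; exact Hl).
  rewrite Ec, Es. auto.
Qed.

Section SmoothOn.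
Variables (U : pt -> Prop) (f : pt -> R).
Hypothesis Hf : smooth_on U f.

Lemma smooth_on_continuous p : U p -> continuous_at_pt f p.
Proof. exact (Hf 0%nat p). Qed.

Lemma smooth_on_has_partial k p : (1 <= k <= 4)%nat -> U p -> has_partial k f p.
Proof. intros Hk. exact (proj1 (proj2 (Hf 1%nat) k Hk) p). Qed.

Lemma smooth_on_partial k : (1 <= k <= 4)%nat -> smooth_on U (partial k f).
Proof. intros Hk n. exact (proj2 (proj2 (Hf (S n)) k Hk)). Qed.

End SmoothOn.

Lemma shift_shift k s t p : shift k t (shift k s p) = shift k (s + t) p.
Proof. destruct p; destruct k as [|[|[|[|[|k]]]]]; simpl; f_equal; ring. Qed.

Lemma shift_0 k p : shift k 0 p = p.
Proof. destruct p; destruct k as [|[|[|[|[|k]]]]]; simpl; f_equal; ring. Qed.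

Lemma smooth_on_shift_invariant k f : (k = 1 \/ k = 3)%nat -> smooth_on U_reg f ->
  (forall p, U_reg p -> partial k f p = 0) -> forall p t, U_reg p -> f (shift k t p) = f p.
Proof.
  intros Hk Hf H0 p t Hp.
  assert (HU : forall s, U_reg (shift k s p)) by (intros s; destruct Hk; subst; exact Hp).
  rewrite <- (shift_0 k p) at 2.
  apply (eq_of_is_derive_0 (fun s => f (shift k s p))). intros s.
  apply is_derive_translate.
  apply is_derive_ext with (f := fun h => f (shift k h (shift k s p))).
  { intros h. now rewrite shift_shift. }
  assert (D := Derive_correct _ _ (smooth_on_has_partial U_reg f Hf k _ ltac:(lia) (HU s))).
  change (Derive _ 0) with (partial k f (shift k s p)) in D. now rewrite H0 in D.
Qed.

Lemma U_reg_locally_2d a c u v : u > Rabs v -> locally_2d (fun u' v' => U_reg (Pt a u' c v')) u v.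
Proof.
  intros Huv. assert (Hd : 0 < (u - Rabs v) / 2) by lra.
  exists (mkposreal _ Hd). intros u' v'; simpl. unfold U_reg; simpl.
  revert Huv. unfold Rabs; repeat destruct Rcase_abs; lra.
Qed.

Lemma continuity_2d_pt_x2_x4 (F : pt -> R) a c u v :
  continuous_at_pt F (Pt a u c v) -> continuity_2d_pt (fun u' v' => F (Pt a u' c v')) u v.
Proof.
  intros H eps. destruct (H eps (cond_pos eps)) as [d [Hd Hd']].
  exists (mkposreal d Hd). intros u' v' Hu Hv. simpl in *.
  apply Hd'; simpl; rewrite ?Rminus_diag, ?Rabs_R0; auto.
Qed.

Lemma smooth_differentiable_x2_x4 f a c u v : smooth_on U_reg f -> u > Rabs v ->
  differentiable_pt_lim (fun u v => f (Pt a u c v)) u v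
    (partial 2 f (Pt a u c v)) (partial 4 f (Pt a u c v)).
Proof.
  intros Hf Huv.
  assert (D2 : forall u' v', partial 2 f (Pt a u' c v') = Derive (fun z => f (Pt a z c v')) u')
    by (intros; apply (Derive_translate (fun z => f (Pt a z c v')))).
  assert (D4 : partial 4 f (Pt a u c v) = Derive (fun z => f (Pt a u c z)) v)
    by apply (Derive_translate (fun z => f (Pt a u c z))).
  rewrite D2, D4. apply differentiable_pt_lim_of_partials.
  - apply locally_2d_impl with (2 := U_reg_locally_2d a c u v Huv), locally_2d_forall.
    intros u' v' H. apply (ex_derive_translate (fun z => f (Pt a z c v'))).
    exact (smooth_on_has_partial U_reg f Hf 2 _ ltac:(lia) H).
  - apply continuity_2d_pt_ext_loc with (f := fun u' v' => partial 2 f (Pt a u' c v')).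
    + apply locally_2d_forall. intros. apply D2.
    + apply continuity_2d_pt_x2_x4, (smooth_on_continuous U_reg).
      * apply smooth_on_partial; [exact Hf | lia].
      * exact Huv.
  - apply (ex_derive_translate (fun z => f (Pt a u c z))).
    exact (smooth_on_has_partial U_reg f Hf 4 (Pt a u c v) ltac:(lia) Huv).
Qed.

(* The part [lam e24] of [xi], acting on [f]. *)
Definition boost_deriv (lam : R) (f : pt -> R) (p : pt) : R :=
  lam * (x4 p * partial 2 f p + x2 p * partial 4 f p).

Lemma is_derive_boost_orbit lam f a c r t : smooth_on U_reg f -> 0 < r ->
  is_derive (fun t => f (boost_orbit lam a c r t)) t (boost_deriv lam f (boost_orbit lam a c r t)).
Proof.
  intros Hf Hr. apply is_derive_Reals.
  assert (Hu := boost_orbit_in_U lam a c r t Hr).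
  assert (Dc : derivable_pt_lim (fun t => r * cosh (lam * t)) t (lam * (r * sinh (lam * t))))
    by (apply is_derive_Reals; unfold cosh, sinh; auto_derive; [exact I | field]).
  assert (Ds : derivable_pt_lim (fun t => r * sinh (lam * t)) t (lam * (r * cosh (lam * t))))
    by (apply is_derive_Reals; unfold cosh, sinh; auto_derive; [exact I | field]).
  pose proof (derivable_pt_lim_comp_2d (fun u v => f (Pt a u c v)) _ _ t _ _ _ _
    (smooth_differentiable_x2_x4 f a c (r * cosh (lam * t)) (r * sinh (lam * t)) Hf Hu) Dc Ds) as H.
  unfold boost_deriv, boost_orbit. cbn [x2 x4].
  match goal with |- derivable_pt_lim _ _ ?g =>
    match type of H with derivable_pt_lim _ _ ?l => replace g with l by ring end end.
  exact H.
Qed.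

Definition radial_slice (f : pt -> R) (r : R) : R := f (Pt 0 r 0 0).

Lemma Derive_n_radial_slice f n r :
  Derive_n (radial_slice f) n r = radial_slice (Nat.iter n (partial 2) f) r.
Proof.
  revert r. induction n as [|n IH]; intros r; [reflexivity|].
  cbn [Derive_n Nat.iter]. rewrite (Derive_ext _ _ r IH).
  symmetry. apply (Derive_translate (fun z => Nat.iter n (partial 2) f (Pt 0 z 0 0))).
Qed.

Lemma smooth_pos_radial_slice f : smooth_on U_reg f -> smooth_pos (radial_slice f).
Proof.
  intros Hf [|n] r Hr; [exact I|]. cbn [ex_derive_n].
  apply ex_derive_ext with (f := radial_slice (Nat.iter n (partial 2) f)).
  { intros z. symmetry. apply Derive_n_radial_slice. }
  apply (ex_derive_translate (fun z => Nat.iter n (partial 2) f (Pt 0 z 0 0))).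
  refine (smooth_on_has_partial U_reg (Nat.iter n (partial 2) f) _ 2 (Pt 0 r 0 0) _ _); [| lia |].
  - clear r Hr. induction n as [|n IH]; [exact Hf|]. apply smooth_on_partial; [exact IH | lia].
  - unfold U_reg; cbn [x2 x4]. rewrite Rabs_R0. exact Hr.
Qed.

Notation xi lam := (fadd e13 (fscal lam e24)).

Ltac compute_lie A :=
  unfold lie, sum_f; simpl;
  repeat match goal with |- context [partial ?k (A ?i) ?q] =>
    let P := fresh "P" in set (P := partial k (A i) q) end;
  unfold partial, fadd, fscal, e13, e24, e1, e3, mkfield; simpl;
  repeat match goal with |- context [Derive ?f 0] =>
    let H := fresh in assert (H : is_derive f 0 _) by (auto_derive; reflexivity);
    rewrite (is_derive_unique _ _ _ H); clear H end;
  ring.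

Lemma lie_e1 (A : field) i p : lie e1 A i p = partial 1 (A i) p.
Proof. compute_lie A. Qed.

Lemma lie_e3 (A : field) i p : lie e3 A i p = partial 3 (A i) p.
Proof. compute_lie A. Qed.

Lemma lie_xi lam (A : field) i p : (1 <= i <= 4)%nat ->
  lie (xi lam) A i p =
  x3 p * partial 1 (A i) p - x1 p * partial 3 (A i) p + boost_deriv lam (A i) p + xi_twist lam A i p.
Proof.
  intros Hi. unfold boost_deriv, xi_twist.
  destruct i as [|[|[|[|[|i]]]]]; try lia; compute_lie A.
Qed.

Definition orbit_ode (lam : R) (A : field) : Prop :=
  forall a c r i t, 0 < r -> (1 <= i <= 4)%nat ->
    is_derive (fun t => A i (boost_orbit lam a c r t)) t (- xi_twist lam A i (boost_orbit lam a c r t)).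

Definition partial13_zero (A : field) : Prop :=
  forall k i p, (k = 1 \/ k = 3)%nat -> (1 <= i <= 4)%nat -> U_reg p -> partial k (A i) p = 0.

Lemma admits_xi_iff_orbit_ode lam (A : field) : lam <> 0 -> smooth_field U_reg A ->
  partial13_zero A -> admits A (xi lam) U_reg <-> orbit_ode lam A.
Proof.
  intros Hl Hs H13. split.
  - intros Hx a c r i t Hr Hi.
    assert (Hq := boost_orbit_in_U lam a c r t Hr).
    assert (L := Hx i _ Hi Hq).
    rewrite lie_xi, !H13 in L by (auto; lia).
    replace (- _) with (boost_deriv lam (A i) (boost_orbit lam a c r t)) by lra.
    exact (is_derive_boost_orbit lam (A i) a c r t (Hs i Hi) Hr).
  - intros Ho i p Hi Hp.
    destruct (boost_orbit_through lam p Hl Hp) as [Hr Hq].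
    assert (D1 := is_derive_boost_orbit lam (A i) (x1 p) (x3 p) (rho p) (phi lam p) (Hs i Hi) Hr).
    assert (D2 := Ho (x1 p) (x3 p) (rho p) i (phi lam p) Hr Hi).
    apply is_derive_unique in D1, D2. rewrite D1, Hq in D2.
    rewrite lie_xi, !H13 by (auto; lia). lra.
Qed.

Definition has_profiles (lam : R) (A : field) (C1 C2 C3 C4 : R -> R) : Prop :=
  forall i p, (1 <= i <= 4)%nat -> U_reg p ->
    A i p = profile lam (C1 (rho p)) (C2 (rho p)) (C3 (rho p)) (C4 (rho p)) i (phi lam p).

Lemma profiles_of_orbit_ode lam (A : field) : lam <> 0 -> smooth_field U_reg A ->
  partial13_zero A -> orbit_ode lam A ->
  has_profiles lam A (radial_slice (A 1%nat)) (radial_slice (A 3%nat))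
    (radial_slice (A 2%nat)) (fun r => - radial_slice (A 4%nat) r).
Proof.
  intros Hl Hs H13 Ho i p Hi Hp.
  destruct (boost_orbit_through lam p Hl Hp) as [Hr Hq].
  set (F := fun j t => A j (boost_orbit lam (x1 p) (x3 p) (rho p) t)).
  assert (Hinit : forall j, (1 <= j <= 4)%nat -> F j 0 = radial_slice (A j) (rho p)).
  { intros j Hj. unfold F, radial_slice. rewrite boost_orbit_0.
    replace (Pt 0 (rho p) 0 0) with (shift 3 (- x3 p) (shift 1 (- x1 p) (Pt (x1 p) (rho p) (x3 p) 0)))
      by (cbn; f_equal; ring).
    assert (HU : U_reg (Pt (x1 p) (rho p) (x3 p) 0)) by (unfold U_reg; cbn; rewrite Rabs_R0; lra).
    assert (Hinv : forall k, (k = 1 \/ k = 3)%nat -> forall q t, U_reg q -> A j (shift k t q) = A j q)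
      by (intros k Hk; apply smooth_on_shift_invariant; auto; intros q; apply H13; auto).
    rewrite !Hinv by auto. reflexivity. }
  assert (Hsol := xi_ode_solution lam F (fun j t Hj => Ho _ _ _ j t Hr Hj) i (phi lam p) Hi).
  unfold F at 1 in Hsol. rewrite Hq in Hsol. rewrite Hsol, !Hinit by lia. reflexivity.
Qed.

Lemma partial13_zero_of_profiles lam A C1 C2 C3 C4 :
  has_profiles lam A C1 C2 C3 C4 -> partial13_zero A.
Proof.
  intros HF k i p Hk Hi Hp. unfold partial.
  assert (HU : forall t, U_reg (shift k t p)) by (intros t; destruct Hk; subst; exact Hp).
  rewrite (Derive_ext _ (fun _ => A i p)); [apply Derive_const|].
  intros t. rewrite (HF i _ Hi (HU t)), (HF i p Hi Hp).
  destruct Hk; subst; reflexivity.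
Qed.

Lemma orbit_ode_of_profiles lam A C1 C2 C3 C4 : lam <> 0 ->
  has_profiles lam A C1 C2 C3 C4 -> orbit_ode lam A.
Proof.
  intros Hl HF a c r i t Hr Hi.
  assert (Hon : forall j s, (1 <= j <= 4)%nat ->
    A j (boost_orbit lam a c r s) = profile lam (C1 r) (C2 r) (C3 r) (C4 r) j s).
  { intros j s Hj. rewrite (HF j _ Hj (boost_orbit_in_U lam a c r s Hr)).
    now rewrite rho_boost_orbit, phi_boost_orbit. }
  apply is_derive_ext with (f := profile lam (C1 r) (C2 r) (C3 r) (C4 r) i).
  { intros s. symmetry. now apply Hon. }
  rewrite (xi_twist_ext lam A (profile lam (C1 r) (C2 r) (C3 r) (C4 r)) _ t i).
  - apply profile_xi_ode.
  - intros j Hj. now apply Hon.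
Qed.

Lemma admits_e1_e3_iff (A : field) :
  admits A e1 U_reg /\ admits A e3 U_reg <-> partial13_zero A.
Proof.
  split.
  - intros [H1 H3] k i p [-> | ->] Hi Hp; [rewrite <- lie_e1 | rewrite <- lie_e3]; auto.
  - intros H13. split; intros i p Hi Hp; [rewrite lie_e1 | rewrite lie_e3]; apply H13; auto.
Qed.

Lemma smooth_pos_opp (C : R -> R) : smooth_pos C -> smooth_pos (fun r => - C r).
Proof. intros H n r Hr. apply ex_derive_n_opp, H, Hr. Qed.

Lemma has_profiles_iff lam (A : field) C1 C2 C3 C4 :
  has_profiles lam A C1 C2 C3 C4 <->
  forall p, U_reg p ->
    A 1%nat p = C1 (rho p) * cos (phi lam p) + C2 (rho p) * sin (phi lam p) /\
    A 2%nat p = C3 (rho p) * cosh (lam * phi lam p) + C4 (rho p) * sinh (lam * phi lam p) /\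
    A 3%nat p = - C1 (rho p) * sin (phi lam p) + C2 (rho p) * cos (phi lam p) /\
    A 4%nat p = - C3 (rho p) * sinh (lam * phi lam p) - C4 (rho p) * cosh (lam * phi lam p).
Proof.
  split.
  - intros H p Hp. repeat split; apply H; auto; lia.
  - intros H i p Hi Hp. destruct (H p Hp) as (E1 & E2 & E3 & E4).
    destruct i as [|[|[|[|[|i]]]]]; try lia; assumption.
Qed.

Theorem mainTheorem7 (lam : R) (A : field) :
  lam <> 0 ->
  smooth_field U_reg A ->
  ((admits A (fadd e13 (fscal lam e24)) U_reg /\ admits A e1 U_reg /\ admits A e3 U_reg)
   <->
   exists C1 C2 C3 C4 : R -> R,
     smooth_pos C1 /\ smooth_pos C2 /\ smooth_pos C3 /\ smooth_pos C4 /\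
     forall p, U_reg p ->
       A 1%nat p = C1 (rho p) * cos (phi lam p) + C2 (rho p) * sin (phi lam p) /\
       A 2%nat p = C3 (rho p) * cosh (lam * phi lam p) + C4 (rho p) * sinh (lam * phi lam p) /\
       A 3%nat p = - C1 (rho p) * sin (phi lam p) + C2 (rho p) * cos (phi lam p) /\
       A 4%nat p = - C3 (rho p) * sinh (lam * phi lam p) - C4 (rho p) * cosh (lam * phi lam p)).
Proof.
  intros Hl Hs. split.
  - intros [Hx H13]. apply admits_e1_e3_iff in H13.
    apply (admits_xi_iff_orbit_ode lam A Hl Hs H13) in Hx.
    set (C4 := fun r => - radial_slice (A 4%nat) r).
    exists (radial_slice (A 1%nat)), (radial_slice (A 3%nat)), (radial_slice (A 2%nat)), C4.
    do 3 (split; [apply smooth_pos_radial_slice, Hs; lia|]).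
    split; [apply smooth_pos_opp, smooth_pos_radial_slice, Hs; lia|].
    apply has_profiles_iff, profiles_of_orbit_ode; assumption.
  - intros (C1 & C2 & C3 & C4 & _ & _ & _ & _ & HF). apply has_profiles_iff in HF.
    assert (H13 := partial13_zero_of_profiles _ _ _ _ _ _ HF).
    split; [|apply admits_e1_e3_iff, H13].
    apply (admits_xi_iff_orbit_ode lam A Hl Hs H13), (orbit_ode_of_profiles lam A C1 C2 C3 C4 Hl HF).
Qed.
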